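(* Let $v(x,y)=[[x,[x,y]],[y,[x,y]]]\in F_2$, where $[a,b]=aba^{-1}b^{-1}$. Then the word map $v:\mathrm{SL}(2,\mathbb{C})^2\to \mathrm{SL}(2,\mathbb{C})$ is surjective, and consequently the induced word map on $\mathrm{PSL}(2,\mathbb{C})$ is surjective. *)

From mathcomp Require Import all_boot all_algebra.
From mathcomp Require Import reals.
From mathcomp.real_closed Require Import complex.
Set Implicit Arguments. Unset Strict Implicit. Unset Printing Implicit Defensive.
Import GRing.Theory.
Local Open Scope ring_scope.

Definition gcomm (G : unitRingType) (a b : G) : G := a * b * a^-1 * b^-1.

Definition word_v (G : unitRingType) (x y : G) : G :=
  gcomm (gcomm x (gcomm x y)) (gcomm y (gcomm x y)).

Definition inSL2 (R : realType) (A : 'M[R[i]]_2) : Prop := \det A = 1.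

From mathcomp Require Import all_boot all_algebra.
From mathcomp Require Import reals.
From mathcomp.real_closed Require Import complex.
From mathcomp Require Import ring.
Import GRing.Theory Num.Theory.
Set Implicit Arguments. Unset Strict Implicit.
Local Open Scope ring_scope.

(** Over an algebraically closed field of characteristic zero, a non-scalar
    matrix of SL(2) is conjugate to the companion matrix of its characteristic
    polynomial, so non-scalar elements of SL(2) are determined up to
    conjugacy by their trace; and the image of a word map is closed under
    conjugation.  It therefore suffices to realise every trace t by a
    non-scalar value of v, together with the two scalars 1 = v(1,1) and -1.
    For x = [[1,1],[0,1]] and y = [[1,0],[z,1]] the trace of v(x,y) is
    2 - 4 z^6 (1+z)^2 (z^5 - 4z^2 - 4z - 4), a polynomial of degree 13 in z,
    so every t is attained; when t <> 2, -2 the value cannot be scalar, since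
    the only scalars in SL(2) are 1 and -1.  For t = 2 a root of the quintic
    factor gives a value with non-zero lower-left entry, and t = -2 as well as
    the scalar -1 are realised by explicit pairs. *)

Section WordConjugation.
Variable G : unitRingType.
Implicit Types P x y : G.

Lemma gcomm_unit x y :
  x \is a GRing.unit -> y \is a GRing.unit -> gcomm x y \is a GRing.unit.
Proof. by move=> ux uy; rewrite /gcomm !unitrMl ?unitrV. Qed.

Lemma invrJ P x : P \is a GRing.unit -> x \is a GRing.unit ->
  (P * x * P^-1)^-1 = P * x^-1 * P^-1.
Proof. by move=> uP ux; rewrite invrM ?unitrV ?unitrMl // invrK invrM // mulrA. Qed.

Lemma gcommJ P x y :
  P \is a GRing.unit -> x \is a GRing.unit -> y \is a GRing.unit ->
  gcomm (P * x * P^-1) (P * y * P^-1) = P * gcomm x y * P^-1.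
Proof. by move=> uP ux uy; rewrite /gcomm !invrJ // !mulrA !divrK. Qed.

Lemma word_vJ P x y :
  P \is a GRing.unit -> x \is a GRing.unit -> y \is a GRing.unit ->
  word_v (P * x * P^-1) (P * y * P^-1) = P * word_v x y * P^-1.
Proof. by move=> uP ux uy; rewrite /word_v !gcommJ ?gcomm_unit. Qed.

Lemma word_v11 : word_v (1 : G) 1 = 1.
Proof. by rewrite /word_v /gcomm !(invr1, mulr1). Qed.

End WordConjugation.

Section SpecialLinear.
Variables (F : comUnitRingType) (n : nat).
Implicit Types P A x y : 'M[F]_n.+1.

Lemma det1_unitr A : \det A = 1 -> A \is a GRing.unit.
Proof. by move=> dA; rewrite -[_ \is a _]/(A \in unitmx) unitmxE dA unitr1. Qed.

Lemma detJ P A : P \is a GRing.unit -> \det (P * A * P^-1) = \det A.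
Proof.
move=> uP; have uPd : \det P \is a GRing.unit by rewrite -unitmxE.
by rewrite !detM detV mulrAC divrr ?mul1r.
Qed.

Lemma det_gcomm x y : \det x = 1 -> \det y = 1 -> \det (gcomm x y) = 1.
Proof. by move=> dx dy; rewrite /gcomm !detM !detV dx dy invr1 !mulr1. Qed.

Lemma det_word_v x y : \det x = 1 -> \det y = 1 -> \det (word_v x y) = 1.
Proof. by move=> dx dy; rewrite /word_v !det_gcomm. Qed.

Lemma word_v_conj_closed P x y : P \is a GRing.unit ->
  \det x = 1 -> \det y = 1 ->
  exists x' y', [/\ \det x' = 1, \det y' = 1 & word_v x' y' = P * word_v x y * P^-1].
Proof.
move=> uP dx dy; exists (P * x * P^-1), (P * y * P^-1).
by split; rewrite ?detJ // word_vJ // det1_unitr.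
Qed.

End SpecialLinear.

Section Matrix2.
Variable F : comUnitRingType.
Implicit Types (a b c d : F) (A : 'M[F]_2).

Definition mx2 a b c d : 'M[F]_2 :=
  \matrix_(i, j) if i == 0 :> nat then (if j == 0 :> nat then a else b)
                 else (if j == 0 :> nat then c else d).

Lemma mx2E A : A = mx2 (A 0 0) (A 0 1) (A 1 0) (A 1 1).
Proof.
apply/matrixP => i j; rewrite mxE.
by case: i => [[|[|i]] Hi]; case: j => [[|[|j]] Hj] //=; congr (A _ _); apply: val_inj.
Qed.

Lemma mulmx2 a b c d a' b' c' d' :
  mx2 a b c d * mx2 a' b' c' d' =
  mx2 (a * a' + b * c') (a * b' + b * d') (c * a' + d * c') (c * b' + d * d').
Proof.
rewrite -mulmxE; apply/matrixP => i j; rewrite !mxE !big_ord_recl big_ord0 !mxE /=.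
by case: i => [[|[|i]] Hi]; case: j => [[|[|j]] Hj] //=; rewrite addr0.
Qed.

Lemma det_mx2 a b c d : \det (mx2 a b c d) = a * d - b * c.
Proof.
rewrite (expand_det_row _ 0) !big_ord_recl big_ord0 /cofactor !det_mx11 !mxE /=.
by rewrite !expr0 !expr1 !mul1r addr0; ring.
Qed.

Lemma tr_mx2 a b c d : \tr (mx2 a b c d) = a + d.
Proof. by rewrite /mxtrace !big_ord_recl big_ord0 !mxE /= addr0. Qed.

Lemma mx2_1 : (1 : 'M[F]_2) = mx2 1 0 0 1.
Proof.
apply/matrixP => i j; rewrite !mxE.
by case: i => [[|[|i]] Hi]; case: j => [[|[|j]] Hj].
Qed.

Lemma mx2_N1 : (-1 : 'M[F]_2) = mx2 (-1) 0 0 (-1).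
Proof.
apply/matrixP => i j; rewrite !mxE.
by case: i => [[|[|i]] Hi]; case: j => [[|[|j]] Hj]; rewrite //= oppr0.
Qed.

Lemma scalar_mx2 a : a%:M = mx2 a 0 0 a.
Proof.
apply/matrixP => i j; rewrite !mxE.
by case: i => [[|[|i]] Hi]; case: j => [[|[|j]] Hj].
Qed.

Lemma is_scalar_mx2 A :
  is_scalar_mx A = [&& A 0 1 == 0, A 1 0 == 0 & A 0 0 == A 1 1].
Proof.
apply/is_scalar_mxP/and3P => [[a ->]|[/eqP b0 /eqP c0 /eqP ad]].
  by rewrite scalar_mx2 !mxE.
by exists (A 1 1); rewrite scalar_mx2 [LHS]mx2E b0 c0 ad.
Qed.

Lemma invmx2 a b c d : a * d - b * c = 1 -> (mx2 a b c d)^-1 = mx2 d (-b) (-c) a.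
Proof.
move=> dA; have uA : mx2 a b c d \is a GRing.unit by rewrite det1_unitr ?det_mx2.
have AB : mx2 a b c d * mx2 d (-b) (-c) a = 1.
  by rewrite mulmx2 mx2_1; congr mx2; rewrite -?dA; ring.
by rewrite -[LHS]mulr1 -AB mulKr.
Qed.

Lemma gcomm_mx2 a b c d a' b' c' d' :
  a * d - b * c = 1 -> a' * d' - b' * c' = 1 ->
  gcomm (mx2 a b c d) (mx2 a' b' c' d') =
  mx2 a b c d * mx2 a' b' c' d' * mx2 d (-b) (-c) a * mx2 d' (-b') (-c') a'.
Proof. by move=> dA dB; rewrite /gcomm !invmx2. Qed.

End Matrix2.

Section FieldMatrix2.
Variable F : fieldType.
Implicit Types A B : 'M[F]_2.

Lemma companion_conj A : ~~ is_scalar_mx A ->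
  exists2 P, P \is a GRing.unit & A = P * mx2 0 (- \det A) 1 (\tr A) * P^-1.
Proof.
rewrite is_scalar_mx2 (mx2E A) det_mx2 tr_mx2 !mxE /=.
set a := A 0 0; set b := A 0 1; set c := A 1 0; set d := A 1 1 => nsA.
suff [P detP AP] : exists2 P : 'M[F]_2, \det P != 0 &
    mx2 a b c d * P = P * mx2 0 (- (a * d - b * c)) 1 (a + d).
  have uP : P \is a GRing.unit by rewrite -[_ \is a _]/(P \in unitmx) unitmxE unitfE.
  by exists P; rewrite // -AP mulrK.
(* P has columns v and A v, for a vector v that is not an eigenvector of A. *)
have [c0|c0] := eqVneq c 0; last first.
  exists (mx2 1 a 0 c); first by rewrite det_mx2 mul1r mulr0 subr0.
  by rewrite !mulmx2; congr mx2; ring.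
have [b0|b0] := eqVneq b 0; last first.
  exists (mx2 0 b 1 d); first by rewrite det_mx2 mul0r mulr1 sub0r oppr_eq0.
  by rewrite !mulmx2 c0; congr mx2; ring.
have ad : a != d by move: nsA; rewrite b0 c0 !eqxx.
exists (mx2 1 a 1 d); first by rewrite det_mx2 mul1r mulr1 subr_eq0 eq_sym.
by rewrite !mulmx2 b0 c0; congr mx2; ring.
Qed.

Lemma conj_nonscalar_mx2 A B : ~~ is_scalar_mx A -> ~~ is_scalar_mx B ->
  \det A = \det B -> \tr A = \tr B ->
  exists2 P, P \is a GRing.unit & A = P * B * P^-1.
Proof.
move=> nsA nsB dAB tAB.
have [P uP ->] := companion_conj nsA; have [Q uQ ->] := companion_conj nsB.
exists (P * Q^-1); first by rewrite unitrMl ?unitrV.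
by rewrite dAB tAB invrM ?unitrV // invrK !mulrA !divrK.
Qed.

Lemma scalar_mx2_det1 A : is_scalar_mx A -> \det A = 1 -> A = 1 \/ A = -1.
Proof.
move=> /is_scalar_mxP[a ->]; rewrite det_scalar expr2 => a2.
have : (a - 1) * (a + 1) == 0.
  by apply/eqP; transitivity (a * a - 1); [ring | rewrite a2 subrr].
rewrite mulf_eq0 subr_eq0 addr_eq0 => /orP[]/eqP->; first by left.
by right; rewrite raddfN.
Qed.

Lemma tr_scalar_mx2_det1 A : is_scalar_mx A -> \det A = 1 -> \tr A = 2 \/ \tr A = -2.
Proof.
move=> sA /(scalar_mx2_det1 sA)[]->; first by left; rewrite mx2_1 tr_mx2.
by right; rewrite mx2_N1 tr_mx2 -opprD.
Qed.

End FieldMatrix2.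

Section WordValues.
Variable F : comUnitRingType.
Implicit Types p z : F.

Ltac gcomm_ring := rewrite gcomm_mx2; [rewrite !mulmx2; congr mx2; ring | ring | ring].
Ltac gcomm_ring_mod h :=
  rewrite gcomm_mx2; [rewrite !mulmx2; congr mx2; ring: h | ring: h | ring: h].

(* The quintic factor of the trace reappears in the lower-left entry: it is
   what makes the value non-scalar when the trace is 2. *)
Lemma word_v_unipotent z (w := word_v (mx2 1 1 0 1) (mx2 1 0 z 1)) :
  \tr w = 2 - 4 * z^+6 * (1 + z)^+2 * (z^+5 - 4 * z^+2 - 4 * z - 4) /\
  w 1 0 = 2 * z^+4 * (z * (1 - 2 * z^+2 - z^+3) * (z^+5 - 4 * z^+2 - 4 * z - 4)
                      + (z^+4 - z^+2 - 2 * z - 2)).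
Proof.
have E1 : gcomm (mx2 1 1 0 1) (mx2 1 0 z 1) = mx2 (1 + z + z^+2) (- z) (z^+2) (1 - z).
  by gcomm_ring.
have E2 : gcomm (mx2 1 1 0 1) (mx2 (1 + z + z^+2) (- z) (z^+2) (1 - z)) =
    mx2 (1 + z^+2 + z^+3 + 2 * z^+4) (- 2 * z - 4 * z^+2 - 3 * z^+3 - 2 * z^+4)
        (z^+4) (1 - z^+2 - z^+3 - z^+4).
  by gcomm_ring.
have E3 : gcomm (mx2 1 0 z 1) (mx2 (1 + z + z^+2) (- z) (z^+2) (1 - z)) =
    mx2 (1 + z^+2 - z^+3) (z^+3) (2 * z^+2 - z^+4) (1 - z^+2 + z^+3 + z^+4).
  by gcomm_ring.
rewrite /w /word_v E1 E2 E3 gcomm_mx2; [|ring|ring].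
by rewrite !mulmx2 tr_mx2 mxE /=; split; ring.
Qed.

Lemma word_v_tr_m2 :
  word_v (mx2 (-2) (-1) 1 0) (mx2 (-1) (-1) 1 0) = mx2 (-7) (-6) 6 5 :> 'M[F]_2.
Proof.
have E1 : gcomm (mx2 (-2) (-1) 1 0) (mx2 (-1) (-1) 1 0) = mx2 3 1 (-1) 0 :> 'M[F]_2.
  by gcomm_ring.
have E2 : gcomm (mx2 (-2) (-1) 1 0) (mx2 3 1 (-1) 0) = mx2 (-1) (-5) 1 4 :> 'M[F]_2.
  by gcomm_ring.
have E3 : gcomm (mx2 (-1) (-1) 1 0) (mx2 3 1 (-1) 0) = mx2 (-1) (-4) 2 7 :> 'M[F]_2.
  by gcomm_ring.
by rewrite /word_v E1 E2 E3; gcomm_ring.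
Qed.

Lemma word_v_m1 p : p^+2 = p - 1 ->
  word_v (mx2 1 1 (-1) 0) (mx2 p 0 (- p) (1 - p)) = -1.
Proof.
move=> hp.
have E1 : gcomm (mx2 1 1 (-1) 0) (mx2 p 0 (- p) (1 - p)) = mx2 (1 - p) 1 (p - 1) (p - 1).
  by gcomm_ring_mod hp.
have E2 : gcomm (mx2 1 1 (-1) 0) (mx2 (1 - p) 1 (p - 1) (p - 1)) = mx2 0 (1 - p) (- p) 0.
  by gcomm_ring_mod hp.
have E3 : gcomm (mx2 p 0 (- p) (1 - p)) (mx2 (1 - p) 1 (p - 1) (p - 1)) = mx2 p p (-1) (- p).
  by gcomm_ring_mod hp.
by rewrite /word_v E1 E2 E3 mx2_N1; gcomm_ring_mod hp.
Qed.

End WordValues.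

Section Surjectivity.
Variable F : numClosedFieldType.
Implicit Types (t : F) (g : 'M[F]_2).

Lemma exists_root_quintic : exists z : F, z^+5 = 4 + 4 * z + 4 * z^+2.
Proof.
have [z hz] := @solve_monicpoly F 5 (fun i => [:: 4; 4; 4; 0; 0]`_i) isT.
by exists z; rewrite hz !big_ord_recl big_ord0 /=; ring.
Qed.

Lemma exists_root_cyclotomic6 : exists p : F, p^+2 = p - 1.
Proof.
have [p hp] := @solve_monicpoly F 2 (fun i => [:: -1; 1]`_i) isT.
by exists p; rewrite hp !big_ord_recl big_ord0 /=; ring.
Qed.

Lemma exists_tr_word_v_unipotent t :
  exists z, \tr (word_v (mx2 1 1 0 1) (mx2 1 0 z 1)) = t.
Proof.
pose c := (2 - t) / 4.
have [z hz] := @solve_monicpoly F 13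
  (fun i => [:: c; 0; 0; 0; 0; 0; 4; 12; 16; 12; 4; -1; -2]`_i) isT.
rewrite !big_ord_recl big_ord0 /= in hz.
exists z; have [-> _] := word_v_unipotent z.
have -> : 2 - 4 * z^+6 * (1 + z)^+2 * (z^+5 - 4 * z^+2 - 4 * z - 4) = 2 - 4 * c.
  by ring: hz.
by rewrite /c; field; rewrite ?pnatr_eq0.
Qed.

Lemma word_v_nonscalar_tr2 : exists x y : 'M[F]_2,
  [/\ \det x = 1, \det y = 1, ~~ is_scalar_mx (word_v x y) & \tr (word_v x y) = 2].
Proof.
have [z hz] := exists_root_quintic.
have q0 : z^+5 - 4 * z^+2 - 4 * z - 4 = 0 by ring: hz.
have z0 : z != 0.
  apply/eqP => z0; move/eqP: q0.
  by rewrite z0 !expr0n /= !mulr0 !subr0 sub0r oppr_eq0 pnatr_eq0.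
have r0 : z^+4 - z^+2 - 2 * z - 2 != 0.
  have bezout : (-16 - 10 * z - 6 * z^+2 + z^+3 + 4 * z^+4)
      * (z^+4 - z^+2 - 2 * z - 2) = 20 by ring: hz.
  by apply: contra_eq_neq bezout => ->; rewrite mulr0 eq_sym pnatr_eq0.
exists (mx2 1 1 0 1), (mx2 1 0 z 1).
have [trw wc] := word_v_unipotent z.
rewrite !det_mx2 is_scalar_mx2 trw wc q0 !mulr0 add0r.
split; [ring | ring | | ring].
have w10 : 2 * z^+4 * (z^+4 - z^+2 - 2 * z - 2) != 0.
  by rewrite !mulf_neq0 ?expf_neq0 ?pnatr_eq0.
by rewrite (negPf w10) andbF.
Qed.

Lemma word_v_nonscalar_tr t : exists x y : 'M[F]_2,
  [/\ \det x = 1, \det y = 1, ~~ is_scalar_mx (word_v x y) & \tr (word_v x y) = t].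
Proof.
have [->|t2] := eqVneq t 2; first exact: word_v_nonscalar_tr2.
have [->|tm2] := eqVneq t (-2).
  exists (mx2 (-2) (-1) 1 0), (mx2 (-1) (-1) 1 0).
  rewrite word_v_tr_m2 !det_mx2 is_scalar_mx2 tr_mx2 !mxE /=.
  by split; [ring | ring | rewrite oppr_eq0 pnatr_eq0 | ring].
have [z trw] := exists_tr_word_v_unipotent t.
have dx : \det (mx2 1 1 0 1 : 'M[F]_2) = 1 by rewrite det_mx2; ring.
have dy : \det (mx2 1 0 z 1) = 1 by rewrite det_mx2; ring.
exists (mx2 1 1 0 1), (mx2 1 0 z 1); split => //.
by apply/negP => /tr_scalar_mx2_det1 /(_ (det_word_v dx dy))[]; rewrite trw; apply/eqP.
Qed.

Lemma word_v_SL2_surj g : \det g = 1 ->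
  exists x y, [/\ \det x = 1, \det y = 1 & word_v x y = g].
Proof.
move=> dg; have [sg|nsg] := boolP (is_scalar_mx g).
  case: (scalar_mx2_det1 sg dg) => ->; first by exists 1, 1; rewrite det1 word_v11.
  have [p hp] := exists_root_cyclotomic6.
  exists (mx2 1 1 (-1) 0), (mx2 p 0 (- p) (1 - p)).
  by rewrite !det_mx2 word_v_m1 //; split; [ring | ring: hp | ].
have [x [y [dx dy nsw trw]]] := word_v_nonscalar_tr (\tr g).
have [P uP ->] := conj_nonscalar_mx2 nsg nsw (etrans dg (esym (det_word_v dx dy))) (esym trw).
exact: word_v_conj_closed.
Qed.

End Surjectivity.

Theorem theorem9p1 (R : realType) :
  (forall g : 'M[R[i]]_2, inSL2 g ->
     exists x y : 'M[R[i]]_2, [/\ inSL2 x, inSL2 y & word_v x y = g]) /\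
  (forall g : 'M[R[i]]_2, inSL2 g ->
     exists x y : 'M[R[i]]_2,
       [/\ inSL2 x, inSL2 y & word_v x y = g \/ word_v x y = - g]).
Proof.
have surj (g : 'M[R[i]]_2) :
    inSL2 g -> exists x y, [/\ inSL2 x, inSL2 y & word_v x y = g].
  exact: word_v_SL2_surj.
split=> [|g /surj[x [y [dx dy wg]]]]; first exact: surj.
by exists x, y; split=> //; left.
Qed.
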